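(* Let $\mathcal V\cong\mathbb R^d$ be a finite-dimensional real normed space, $\mathcal X\subseteq\mathcal V$ convex, and $f:\mathcal V\to\mathbb R\cup\{+\infty\}$ proper, lower semicontinuous and convex with $\operatorname{dom} f=\mathcal X$ and nonempty solution set. Let $h$ be a Bregman function on $\mathcal X$ and suppose $f$ is relatively continuous with constant $G$. Then the Bregman residuals $\delta_t$ of AdaMir run with perfect (sub)gradients satisfy $\delta_t^2\le2G^2$ for all $t\ge1$.
   Context: $\mathcal V^*$ denotes the dual space with pairing $\langle\cdot,\cdot\rangle$. For $x\in\operatorname{dom}\partial f$, $\nabla f(x)$ denotes a fixed selection of $\partial f(x)$. A Bregman function on $\mathcal X$ is a convex lower semicontinuous $h:\mathcal V\to\mathbb R\cup\{+\infty\}$ with $\operatorname{dom}\partial h\subseteq\mathcal X\subseteq\operatorname{dom}h$, whose subdifferential admits a continuous selection $\nabla h(x)\in\partial h(x)$ on $\operatorname{dom}\partial h$, and which is $K$-strongly convex for some $K>0$: $h(x')\ge h(x)+\langle\nabla h(x),x'-x\rangle+\frac K2\|x'-x\|^2$ for all $x,x'\in\operatorname{dom}\partial h$. Bregman divergence: $D(p,x)=h(p)-h(x)-\langle\nabla h(x),p-x\rangle$; prox-mapping: $P_x(y)=\arg\min_{x'\in\mathcal X}\{\langle y,x-x'\rangle+D(x',x)\}$ for $x\in\operatorname{dom}\partial h$, $y\in\mathcal V^*$. AdaMir with perfect gradients: pick $x_0\neq x_1$ in $\operatorname{dom}\partial h$, $\delta_0=[D(x_0,x_1)+D(x_1,x_0)]^{1/2}$.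 For $t=1,2,\dots$: $\gamma_t=\big(\sum_{s=0}^{t-1}\delta_s^2\big)^{-1/2}$, $x_{t+1}=P_{x_t}(-\gamma_t\nabla f(x_t))$, $\delta_t=[D(x_t,x_{t+1})+D(x_{t+1},x_t)]^{1/2}/\gamma_t$. $f$ is relatively continuous with constant $G>0$ if $f(x)-f(x')\le\langle\nabla f(x),x-x'\rangle\le G\sqrt{2D(x',x)}$ for all $x\in\operatorname{dom}\partial h$, $x'\in\operatorname{dom}h$. *)

From HB Require Import structures.
From mathcomp Require Import all_boot all_order all_algebra.
From mathcomp Require Import all_classical all_reals all_analysis.
Set Implicit Arguments. Unset Strict Implicit. Unset Printing Implicit Defensive.
Import Order.TTheory GRing.Theory Num.Theory.
Import numFieldNormedType.Exports.
Local Open Scope classical_set_scope.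
Local Open Scope ring_scope.

(* The space V = R^d is modelled as row vectors 'rV[R]_d (with its canonical,
   finite-dimensional topology); the dual V^* is identified with 'rV[R]_d as
   well, via the pairing <y, x> = sum_i y_i x_i. *)
Definition pair (R : realType) (d : nat) (y x : 'rV[R]_d) : R :=
  \sum_(i < d) y ord0 i * x ord0 i.

Definition is_norm (R : realType) (d : nat) (nrm : 'rV[R]_d -> R) : Prop :=
  (forall x y, nrm (x + y) <= nrm x + nrm y) /\
  (forall (a : R) x, nrm (a *: x) = `|a| * nrm x) /\
  (forall x, nrm x = 0 -> x = 0).

Definition convex_fun (R : realType) (d : nat) (f : 'rV[R]_d -> \bar R) : Prop :=
  forall (x y : 'rV[R]_d) (l : R), 0 <= l <= 1 ->
    (f (l *: x + (1 - l) *: y)%R <= l%:E * f x + (1 - l)%:E * f y)%E.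

Definition edom (R : realType) (d : nat) (f : 'rV[R]_d -> \bar R) : set 'rV[R]_d :=
  [set x | (f x < +oo)%E].

Definition proper_fun (R : realType) (d : nat) (f : 'rV[R]_d -> \bar R) : Prop :=
  (forall x, f x != -oo%E) /\ (exists x, f x \is a fin_num).

Definition subdiff (R : realType) (d : nat) (f : 'rV[R]_d -> \bar R) (x : 'rV[R]_d)
  : set 'rV[R]_d :=
  [set g | f x \is a fin_num /\
           forall x', (f x + (pair g (x' - x)%R)%:E <= f x')%E].

Definition dom_subdiff (R : realType) (d : nat) (f : 'rV[R]_d -> \bar R) : set 'rV[R]_d :=
  [set x | subdiff f x !=set0].

Definition bregman_fun (R : realType) (d : nat) (nrm : 'rV[R]_d -> R)
  (X : set 'rV[R]_d) (h : 'rV[R]_d -> \bar R) (gradh : 'rV[R]_d -> 'rV[R]_d)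
  (K : R) : Prop :=
  (forall x, h x != -oo%E) /\
  convex_fun h /\ lower_semicontinuous h /\
  dom_subdiff h `<=` X /\ X `<=` edom h /\
  (forall x, dom_subdiff h x -> subdiff h x (gradh x)) /\
  {within dom_subdiff h, continuous gradh} /\
  0 < K /\
  (forall x x', dom_subdiff h x -> dom_subdiff h x' ->
     (h x' >= h x + (pair (gradh x) (x' - x)%R)%:E + (K / 2 * nrm (x' - x)%R ^+ 2)%:E)%E).

(* Bregman divergence D(p, x); it is only ever evaluated at points of dom h
   (where h is finite), so the real part `fine` is exact there. *)
Definition breg (R : realType) (d : nat) (h : 'rV[R]_d -> \bar R)
  (gradh : 'rV[R]_d -> 'rV[R]_d) (p x : 'rV[R]_d) : R :=
  fine (h p) - fine (h x) - pair (gradh x) (p - x).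

Definition is_prox (R : realType) (d : nat) (X : set 'rV[R]_d) (h : 'rV[R]_d -> \bar R)
  (gradh : 'rV[R]_d -> 'rV[R]_d) (x y xp : 'rV[R]_d) : Prop :=
  X xp /\ forall x', X x' ->
    pair y (x - xp) + breg h gradh xp x <= pair y (x - x') + breg h gradh x' x.

Definition rel_continuous (R : realType) (d : nat) (f h : 'rV[R]_d -> \bar R)
  (gradf gradh : 'rV[R]_d -> 'rV[R]_d) (G : R) : Prop :=
  forall x x', dom_subdiff h x -> edom h x' ->
    (f x - f x' <= (pair (gradf x) (x - x')%R)%:E)%E /\
    pair (gradf x) (x - x') <= G * Num.sqrt (2 * breg h gradh x' x).

From HB Require Import structures.
From mathcomp Require Import all_boot all_order all_algebra.
From mathcomp Require Import all_classical all_reals all_analysis.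
From mathcomp Require Import ring lra.
Import Order.TTheory GRing.Theory Num.Theory.
Import numFieldNormedType.Exports.
Local Open Scope classical_set_scope.
Local Open Scope ring_scope.
Set Implicit Arguments.
Unset Strict Implicit.
Unset Printing Implicit Defensive.

(* Write a = x_{t+1}, b = x_t and v = b - a. Testing the optimality of the prox
   step at b gives
     D(b, a) + D(a, b) = <grad h(b) - grad h(a), v> <= gamma_t <grad f(b), v>,
   and relative continuity bounds the right-hand side by
   gamma_t G sqrt(2 D(a, b)) <= gamma_t G sqrt(2 (D(b, a) + D(a, b))).
   Hence D(b, a) + D(a, b) <= 2 gamma_t^2 G^2, which is delta_t^2 <= 2 G^2.
   As h is not differentiable, the optimality condition is derived from the
   one-sided bound h(a + lam v) - h(a) <= lam (<grad h(a), v> + eps) for small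
   lam > 0. It holds because grad h is continuous on dom (subdiff h), h is lower
   semicontinuous, and dom (subdiff h) is dense in dom h: the minimiser of
   h + m/2 |. - y|^2 lies in dom (subdiff h) and tends to y as m grows. *)

Section EuclideanPairing.
Context {R : realType} {d : nat}.
Implicit Types (u v x y : 'rV[R]_d).

Lemma pairC y x : pair y x = pair x y.
Proof. by apply: eq_bigr => i _; rewrite mulrC. Qed.

Lemma pairDl u v x : pair (u + v) x = pair u x + pair v x.
Proof. by rewrite /pair -big_split; apply: eq_bigr => i _; rewrite !mxE mulrDl. Qed.

Lemma pairDr y u v : pair y (u + v) = pair y u + pair y v.
Proof. by rewrite pairC pairDl !(pairC y). Qed.

Lemma pairZl (a : R) y x : pair (a *: y) x = a * pair y x.
Proof. by rewrite /pair mulr_sumr; apply: eq_bigr => i _; rewrite !mxE mulrA. Qed.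

Lemma pairZr (a : R) y x : pair y (a *: x) = a * pair y x.
Proof. by rewrite pairC pairZl pairC. Qed.

Lemma pairNl y x : pair (- y) x = - pair y x.
Proof. by rewrite -scaleN1r pairZl mulN1r. Qed.

Lemma pairNr y x : pair y (- x) = - pair y x.
Proof. by rewrite pairC pairNl pairC. Qed.

Lemma pairBl u v x : pair (u - v) x = pair u x - pair v x.
Proof. by rewrite pairDl pairNl. Qed.

Lemma pairBr y u v : pair y (u - v) = pair y u - pair y v.
Proof. by rewrite pairDr pairNr. Qed.

Lemma pair0r y : pair y 0 = 0.
Proof. by rewrite /pair big1 // => i _; rewrite mxE mulr0. Qed.

Lemma pairxx_ge0 u : 0 <= pair u u.
Proof. by rewrite sumr_ge0 // => i _; rewrite -expr2 sqr_ge0. Qed.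

Lemma sqr_coord_le_pairxx u i : u ord0 i ^+ 2 <= pair u u.
Proof.
rewrite /pair (bigD1 i) //= -expr2 lerDl sumr_ge0 // => j _.
by rewrite -expr2 sqr_ge0.
Qed.

Lemma normr_coord_le v i : `|v ord0 i| <= `|v|.
Proof.
by rewrite [leRHS]/Num.Def.normr /= mx_normrE; apply/bigmax_geP; right; exists (ord0, i).
Qed.

Lemma sqr_normr_le_pairxx v : `|v| ^+ 2 <= pair v v.
Proof.
have -> : `|v| = mx_norm v by [].
have [->|/mx_norm_neq0 [[i j] ->]] := eqVneq (mx_norm v) 0.
  by rewrite expr0n pairxx_ge0.
rewrite /= (ord1 i) real_normK ?num_real //; exact: sqr_coord_le_pairxx.
Qed.

Lemma normr_pair_le u v : `|pair u v| <= d%:R * (`|u| * `|v|).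
Proof.
apply: le_trans (ler_norm_sum _ _ _) _.
apply: (@le_trans _ _ (\sum_(i < d) `|u| * `|v|)).
  by apply: ler_sum => i _; rewrite normrM ler_pM ?normr_coord_le.
by rewrite sumr_const card_ord mulr_natl.
Qed.

Lemma pairxxDZ u s (c : R) :
  pair (u + c *: s) (u + c *: s) = pair u u + 2 * c * pair s u + c ^+ 2 * pair s s.
Proof. by rewrite !pairDl !pairDr !pairZl !pairZr (pairC u s); ring. Qed.

Lemma continuous_pairxxB y : continuous (fun w : 'rV[R]_d => pair (w - y) (w - y)).
Proof.
rewrite /pair; apply: continuous_big => [|i _]; first exact: add_continuous.
have coordB : continuous (fun w : 'rV[R]_d => (w - y) ord0 i).
  have -> : (fun w : 'rV[R]_d => (w - y) ord0 i) = (fun w => w ord0 i - y ord0 i).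
    by apply: funext => w; rewrite !mxE.
  by move=> w; exact: cvgB (@coord_continuous R 1 d ord0 i w) (cvg_cst _).
by move=> w; exact: cvgM (coordB w) (coordB w).
Qed.

Lemma closed_pairxx_bounded_compact (S : set 'rV[R]_d) y (B : R) :
  closed S -> (forall w, S w -> pair (w - y) (w - y) <= B) -> compact S.
Proof.
move=> clS SB; apply: bounded_closed_compact => //.
exists (`|y| + 1 + B); split; first exact: num_real.
move=> M ltM w Sw; apply: le_trans (ltW ltM).
have wy2 := le_trans (sqr_normr_le_pairxx (w - y)) (SB w Sw).
have := ler_normD (w - y) y; rewrite subrK.
have := normr_ge0 (w - y); nra.
Qed.

End EuclideanPairing.

Lemma ler_add_vanishing (R : realFieldType) (a b c : R) :
  0 <= c -> (forall t, 0 < t -> t <= 1 -> a <= b + t * c) -> a <= b.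
Proof.
move=> c0 H; rewrite leNgt; apply/negP => ba.
have ab0 : 0 < a - b by rewrite subr_gt0.
have abc0 : 0 < a - b + c by lra.
pose t := (a - b) / (a - b + c).
have t0 : 0 < t by rewrite divr_gt0.
have t1 : t <= 1 by rewrite ler_pdivrMr // mul1r lerDl.
have tc : t * c < a - b.
  by rewrite /t mulrAC ltr_pdivrMr //; nra.
have := H t t0 t1; lra.
Qed.

Lemma seq_argmin {disp} {T : orderType disp} {I : eqType} (F : I -> T) (s : seq I) i0 :
  i0 \in s -> exists2 i, i \in s & forall j, j \in s -> (F i <= F j)%O.
Proof.
elim: s i0 => // a s IH i0 _.
case: s IH => [|b s] IH.
  by exists a => [|j]; rewrite ?mem_head // inE => /eqP->.
have [i si Fi] := IH b (mem_head _ _).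
have [Fai|Fia] := leP (F a) (F i).
  exists a => [|j]; first exact: mem_head.
  by rewrite inE => /predU1P[->//|/Fi]; exact: le_trans.
exists i => [|j]; first by rewrite inE si orbT.
by rewrite inE => /predU1P[->|/Fi//]; exact: ltW.
Qed.

Section LowerSemicontinuous.
Context {T : ptopologicalType} {R : realType}.

Lemma lsc_compact_argmin (F : T -> \bar R) (S : set T) :
  compact S -> S !=set0 -> (forall w, S w -> F w \is a fin_num) ->
  lower_semicontinuous F -> exists2 z, S z & forall w, S w -> (F z <= F w)%E.
Proof.
move=> cS [w0 Sw0] Sfin lscF; apply: contrapT => nomin.
have cov : S `<=` cover S (fun w' => [set w | (F w' < F w)%E]).
  move=> w Sw; apply: contrapT => nw; apply: nomin; exists w => // w' Sw'.
  by rewrite leNgt; apply/negP => lt; apply: nw; exists w'.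
have op w' : S w' -> open [set w | (F w' < F w)%E].
  by move=> Sw'; rewrite -(fineK (Sfin _ Sw')); exact: (proj1 (lower_semicontinuousP F)).
move: cS; rewrite compact_cover => /(_ _ S _ op cov) [D' sD' cov'].
have [i Di _] := cov' w0 Sw0.
have [w wD Hw] := seq_argmin F Di.
have Sw : S w by have := sD' _ wD; rewrite inE.
have [j Dj /= ltj] := cov' w Sw.
by have := Hw j Dj; rewrite leNgt ltj.
Qed.

Lemma lower_semicontinuousDr (F : T -> \bar R) (c : T -> R) :
  lower_semicontinuous F -> continuous c ->
  lower_semicontinuous (fun w => (F w + (c w)%:E)%E).
Proof.
move=> lscF cc x a Fxa.
have [b [ab Fxb]] : exists b, a - c x < b /\ (b%:E < F x)%E.
  move: Fxa; case: (F x) => [r| |] //=.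
  - rewrite -EFinD lte_fin => acr.
    by exists ((a - c x + r) / 2); rewrite lte_fin; split; lra.
  - by move=> _; exists (a - c x + 1); split; [lra | exact: ltry].
have [V nV HV] := lscF x b Fxb.
have cxb : 0 < b - (a - c x) by lra.
have := cvgr_dist_lt _ _ (cc x) _ cxb => /(_ (nbhs_filter x)) nc.
exists (V `&` [set w | `|c x - c w| < b - (a - c x)]); first exact: filterI nV nc.
move=> w [/HV + /= cw]; case: (F w) => [r| |] //=; last by move=> _; rewrite ltry.
by rewrite !lte_fin; move: cw; rewrite ltr_norml => /andP[c1 c2] br; lra.
Qed.

End LowerSemicontinuous.

Lemma continuous_within_dist_lt (R : realType) (U V : normedModType R) (D : set U)
    (g : U -> V) a e :
  {within D, continuous g} -> D a -> 0 < e ->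
  exists2 r, 0 < r & forall z, D z -> `|a - z| < r -> `|g a - g z| < e.
Proof.
move=> gcont Da e0.
have := cvgr_dist_lt _ _ (proj1 (subspace_continuousP _ _) gcont a Da) _ e0.
move=> /(_ (within_filter _ _)); rewrite /within => /nbhs_ballP[r r0 Hr].
exists r => // z Dz az.
by apply: Hr Dz; rewrite -ball_normE.
Qed.

Lemma convex_set_comb (R : realType) d (X : set 'rV[R]_d) a b (l : R) :
  convex_set X -> X a -> X b -> 0 <= l <= 1 -> X (l *: a + (1 - l) *: b).
Proof.
move=> cX Xa Xb /andP[l0 l1].
by have := cX a b (@Itv01 _ _ l0 l1) (mem_set Xa) (mem_set Xb); rewrite inE.
Qed.

Section ProperConvexFunction.
Context {R : realType} {d : nat} (h : 'rV[R]_d -> \bar R).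
Hypothesis h_convex : convex_fun h.
Hypothesis h_nmo : forall x, h x != -oo%E.
Hypothesis h_lsc : lower_semicontinuous h.

(* m is the inverse of the usual Moreau parameter. *)
Definition moreau_obj (m : R) (y w : 'rV[R]_d) : \bar R :=
  (h w + (m / 2 * pair (w - y) (w - y))%:E)%E.

Lemma fin_num_of_le {w} {r : R} : (h w <= r%:E)%E -> h w \is a fin_num.
Proof. by rewrite fin_numE h_nmo /=; apply: contraTneq => ->; rewrite leye_eq. Qed.

Lemma moreau_obj_fin_num m y w (r : R) :
  (moreau_obj m y w <= r%:E)%E -> h w \is a fin_num.
Proof.
move=> le_r; apply: (@fin_num_of_le w (r - m / 2 * pair (w - y) (w - y))).
by rewrite EFinB leeBrDr.
Qed.

Lemma subdiff_moreau_argmin m y z : 0 < m -> h z \is a fin_num ->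
  (forall w, (moreau_obj m y z <= moreau_obj m y w)%E) -> subdiff h z (m *: (y - z)).
Proof.
move=> m0 hzf zmin; split => // w.
case hw: (h w) => [r| |]; [| by rewrite leey | by have := h_nmo w; rewrite hw].
move: hzf zmin; rewrite /moreau_obj; case hz: (h z) => [s| |] // _ zmin.
rewrite -EFinD lee_fin.
apply: (@ler_add_vanishing _ _ _ (m / 2 * pair (w - z) (w - z))).
  by rewrite mulr_ge0 ?pairxx_ge0 // divr_ge0 // ltW.
move=> t t0 t1.
have := @h_convex w z t; rewrite ltW //= t1 => /(_ isT).
set zt := t *: w + (1 - t) *: z; rewrite hw hz -!EFinM -EFinD => hzt_le.
have hztf := fin_num_of_le hzt_le.
rewrite -(fineK hztf) lee_fin in hzt_le.
have := zmin zt; rewrite -(fineK hztf) -!EFinD lee_fin.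
have -> : zt - y = (z - y) + t *: (w - z) by apply/rowP => i; rewrite !mxE; ring.
have -> : pair (m *: (y - z)) (w - z) = - (m * pair (w - z) (z - y)).
  by rewrite pairZl pairC -[y - z]opprB pairNr mulrN.
rewrite pairxxDZ.
have := pairxx_ge0 (w - z).
nra.
Qed.

Lemma moreau_sublevel_bound x0 s0 y w m : subdiff h x0 s0 -> h y \is a fin_num -> 1 <= m ->
  (moreau_obj m y w <= h y)%E ->
  m * pair (w - y) (w - y) <= 4 * (`|fine (h y) - fine (h x0) - pair s0 (y - x0)| + pair s0 s0).
Proof.
move=> [hx0f hx0] hyf m1 wy.
have hwf : h w \is a fin_num by rewrite -(fineK hyf) in wy; exact: moreau_obj_fin_num wy.
move: wy; rewrite /moreau_obj -(fineK hwf) -(fineK hyf) -EFinD lee_fin => wy.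
have := hx0 w; rewrite -(fineK hwf) -(fineK hx0f) -EFinD lee_fin.
have -> : w - x0 = (w - y) + (y - x0) by rewrite addrA subrK.
rewrite pairDr => sub_w.
(* Completing the square against the subgradient s0 yields the coercivity. *)
have := pairxx_ge0 (m *: (w - y) + 2 *: s0).
rewrite pairxxDZ !pairZl !pairZr => sq_ge0.
have := pairxx_ge0 s0; have := pairxx_ge0 (w - y).
set q := pair (w - y) (w - y) in wy sq_ge0 *; set p := pair s0 (w - y) in sub_w sq_ge0.
set Q := pair s0 s0 in sq_ge0 *.
set A := fine (h y) - fine (h x0) - pair s0 (y - x0) => q_ge0 Q_ge0.
have m0 : 0 <= m by apply: le_trans m1.
have wA : m / 2 * q <= A - p by rewrite /A; lra.
have mA : m * A <= m * `|A| by rewrite ler_wpM2l // ler_norm.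
have mQ : Q <= m * Q by rewrite ler_peMl.
rewrite -(ler_pM2l (lt_le_trans ltr01 m1)).
have := ler_wpM2l m0 wA; nra.
Qed.

Lemma moreau_argmin_exists x0 s0 y m : subdiff h x0 s0 -> h y \is a fin_num -> 1 <= m ->
  exists z, forall w, (moreau_obj m y z <= moreau_obj m y w)%E.
Proof.
move=> hs0 hyf m1.
set Psi := moreau_obj m y.
have Psiy : Psi y = h y by rewrite /Psi /moreau_obj subrr pair0r mulr0 adde0.
pose S := [set w | (Psi w <= Psi y)%E].
have Sfin w : S w -> Psi w \is a fin_num.
  move=> Sw; rewrite fin_numE; apply/andP; split.
    by rewrite /Psi /moreau_obj; apply: contra (h_nmo w); rewrite adde_eq_ninfty /= orbF.
  by apply/eqP => Psiw; move: Sw; rewrite /S /= Psiw Psiy -(fineK hyf) leye_eq.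
have Psi_lsc : lower_semicontinuous Psi.
  apply: lower_semicontinuousDr => // w.
  by have := @continuous_pairxxB R d y w => /(cvgMl_tmp (a := m / 2)).
have S_closed : closed S.
  have -> : S = ~` [set w | ((fine (Psi y))%:E < Psi w)%E].
    by apply/seteqP; split => w; rewrite /S /= Psiy fineK // leNgt => /negP.
  by apply: open_closedC; exact: (proj1 (lower_semicontinuousP Psi) Psi_lsc).
have S_compact : compact S.
  apply: (closed_pairxx_bounded_compact S_closed) => w; rewrite /S /= Psiy => Sw.
  apply: le_trans (moreau_sublevel_bound hs0 hyf m1 Sw).
  exact: ler_peMl (pairxx_ge0 _) m1.
have [z Sz zmin] := lsc_compact_argmin S_compact (ex_intro _ y (lexx _)) Sfin Psi_lsc.
exists z => w; have [Sw|nSw] := pselect (S w); first exact: zmin.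
by apply: le_trans Sz _; rewrite leNgt; apply/negP => /ltW.
Qed.

Lemma dom_subdiff_dense x0 s0 y e : subdiff h x0 s0 -> h y \is a fin_num -> 0 < e ->
  exists2 z, dom_subdiff h z & `|z - y| < e.
Proof.
move=> hs0 hyf e0.
set B := 4 * (`|fine (h y) - fine (h x0) - pair s0 (y - x0)| + pair s0 s0).
have B0 : 0 <= B by rewrite mulr_ge0 // addr_ge0 // pairxx_ge0.
have e20 : 0 < e ^+ 2 by rewrite exprn_gt0.
pose m := 1 + B / e ^+ 2.
have m1 : 1 <= m by rewrite lerDl divr_ge0 // ltW.
have [z zmin] := moreau_argmin_exists hs0 hyf m1.
have zy : (moreau_obj m y z <= h y)%E.
  by have := zmin y; rewrite {2}/moreau_obj subrr pair0r mulr0 adde0.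
have hzf : h z \is a fin_num by rewrite -(fineK hyf) in zy; exact: moreau_obj_fin_num zy.
exists z.
  exists (m *: (y - z)); apply: subdiff_moreau_argmin => //; exact: lt_le_trans ltr01 m1.
have mB : B < m * e ^+ 2 by rewrite mulrDl mul1r divfK ?gt_eqF // ltrDr.
have q_lt : pair (z - y) (z - y) < e ^+ 2.
  rewrite -(ltr_pM2l (lt_le_trans ltr01 m1)).
  exact: le_lt_trans (moreau_sublevel_bound hs0 hyf m1 zy) mB.
have := le_lt_trans (sqr_normr_le_pairxx _) q_lt.
by rewrite ltr_pXn2r // nnegrE // ltW.
Qed.

Lemma dom_subdiff_approx x0 s0 y e k : subdiff h x0 s0 -> h y \is a fin_num -> 0 < e -> 0 < k ->
  exists z, [/\ dom_subdiff h z, `|z - y| < e & fine (h y) - k < fine (h z)].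
Proof.
move=> hs0 hyf e0 k0.
have hy_gt : ((fine (h y) - k)%:E < h y)%E.
  by rewrite -[ltRHS](fineK hyf) lte_fin ltrBlDr ltrDl.
have [V nV HV] := h_lsc hy_gt.
have [rho rho0 rhoV] := proj1 (nbhs_ballP _ _) nV.
have erho0 : 0 < Num.min e rho by rewrite lt_min e0 rho0.
have [z Dz zy] := dom_subdiff_dense hs0 hyf erho0.
have [s [hzf _]] := Dz.
exists z; split => //; first by apply: lt_le_trans zy _; rewrite ge_min lexx.
rewrite -lte_fin (fineK hzf); apply: HV; apply: rhoV.
by rewrite -ball_normE /ball_ /= distrC; apply: lt_le_trans zy _; rewrite ge_min lexx orbT.
Qed.

Variable gradh : 'rV[R]_d -> 'rV[R]_d.
Hypothesis gradh_subdiff : forall x, dom_subdiff h x -> subdiff h x (gradh x).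
Hypothesis gradh_cont : {within dom_subdiff h, continuous gradh}.

Lemma secant_le_grad_nearby a y r M k :
  dom_subdiff h a -> h y \is a fin_num -> 0 < r -> 0 < k ->
  (forall z, dom_subdiff h z -> `|z - y| < r -> `|gradh z| <= M) ->
  exists z, [/\ dom_subdiff h z, `|z - y| < r &
                fine (h y) - fine (h a) <= pair (gradh z) (y - a) + k].
Proof.
move=> Da hyf r0 k0 gradM.
have [haf _] := gradh_subdiff Da.
have p0 : 0 < d%:R * `|M| + 1 by rewrite ltr_wpDl ?mulr_ge0.
pose dl := Num.min r (k / 2 / (d%:R * `|M| + 1)).
have dl0 : 0 < dl by rewrite lt_min r0 !divr_gt0.
have k20 : 0 < k / 2 by rewrite divr_gt0.
have [z [Dz zy hzy]] := dom_subdiff_approx (gradh_subdiff Da) hyf dl0 k20.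
have zyr : `|z - y| < r by apply: lt_le_trans zy _; rewrite ge_min lexx.
exists z; split => //.
have [hzf hz] := gradh_subdiff Dz.
have := hz a; rewrite -(fineK haf) -(fineK hzf) -EFinD lee_fin.
have -> : a - z = - ((y - a) + (z - y)) by apply/rowP => i; rewrite !mxE; ring.
rewrite pairNr pairDr => hza.
have gz_dl : d%:R * (`|gradh z| * `|z - y|) <= k / 2.
  apply: le_trans (_ : d%:R * (`|M| * dl) <= _).
    rewrite ler_wpM2l // ler_pM //; last exact/ltW.
    exact: le_trans (gradM z Dz zyr) (ler_norm M).
  have : dl * (d%:R * `|M| + 1) <= k / 2 by rewrite -ler_pdivlMr // ge_min lexx orbT.
  have := ltW dl0; nra.
have := le_trans (ler_norm _) (le_trans (normr_pair_le (gradh z) (z - y)) gz_dl).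
lra.
Qed.

Lemma subdiff_slope_le a b eps : dom_subdiff h a -> h b \is a fin_num -> 0 < eps ->
  exists lam, [/\ 0 < lam, lam <= 1 &
    fine (h (a + lam *: (b - a))) - fine (h a) <= lam * (pair (gradh a) (b - a) + eps)].
Proof.
move=> Da hbf eps0.
have [haf _] := gradh_subdiff Da.
set v := b - a; set ga := gradh a.
have pv0 : 0 < d%:R * `|v| + 1 by rewrite ltr_wpDl ?mulr_ge0.
pose e1 := eps / (d%:R * `|v| + 1).
have e10 : 0 < e1 by rewrite divr_gt0.
have e1v : d%:R * `|v| * e1 <= eps.
  rewrite /e1 mulrA ler_pdivrMr // mulrDr mulr1 mulrC lerDl; exact: ltW.
have [r r0 near_ga] := continuous_within_dist_lt gradh_cont Da e10.
pose lam := Num.min 1 (r / 2 / (`|v| + 1)).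
have v10 : 0 < `|v| + 1 by rewrite ltr_wpDl.
have lam0 : 0 < lam by rewrite lt_min ltr01 !divr_gt0.
have lam1 : lam <= 1 by rewrite ge_min lexx.
have lamv : `|lam *: v| < r / 2.
  have : lam * (`|v| + 1) <= r / 2 by rewrite -ler_pdivlMr // ge_min lexx orbT.
  rewrite normrZ gtr0_norm //; nra.
set y := a + lam *: v.
have hyf : h y \is a fin_num.
  have := @h_convex b a lam; rewrite ltW //= lam1 => /(_ isT).
  rewrite (_ : lam *: b + (1 - lam) *: a = y); last by apply/rowP => i; rewrite !mxE; ring.
  rewrite -(fineK hbf) -(fineK haf) -!EFinM -EFinD; exact: fin_num_of_le.
have ga_near z : dom_subdiff h z -> `|z - y| < r / 2 -> `|ga - gradh z| < e1.
  move=> Dz zy; apply: near_ga => //.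
  have -> : a - z = - (lam *: v + (z - y)) by apply/rowP => i; rewrite !mxE; ring.
  rewrite normrN; apply: le_lt_trans (ler_normD _ _) _.
  by rewrite [r]splitr ltrD.
exists lam; split => //.
apply/ler_addgt0Pr => k k0.
have gz_bound z : dom_subdiff h z -> `|z - y| < r / 2 -> `|gradh z| <= `|ga| + e1.
  move=> Dz zy.
  have -> : gradh z = ga - (ga - gradh z) by rewrite opprB addrCA subrr addr0.
  by apply: le_trans (ler_normB _ _) _; rewrite lerD2l ltW // ga_near.
have r20 : 0 < r / 2 by rewrite divr_gt0.
have [z [Dz zy hzy]] := secant_le_grad_nearby Da hyf r20 k0 gz_bound.
rewrite (_ : y - a = lam *: v) ?pairZr in hzy; last by rewrite /y addrAC subrr add0r.
have gz_ga : pair (gradh z) v <= pair ga v + eps.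
  have gv : d%:R * (`|ga - gradh z| * `|v|) <= eps.
    apply: le_trans e1v; rewrite -mulrA ler_wpM2l // [leLHS]mulrC ler_wpM2l //.
    exact/ltW/ga_near.
  have := le_trans (ler_norm _) (normr_pair_le (gradh z - ga) v).
  rewrite pairBl distrC; lra.
have := ler_wpM2l (ltW lam0) gz_ga; lra.
Qed.

Lemma prox_variational_ineq X x y xp x' :
  convex_set X -> dom_subdiff h xp -> is_prox X h gradh x y xp -> X x' ->
  h x' \is a fin_num -> pair y (x' - xp) <= pair (gradh xp - gradh x) (x' - xp).
Proof.
move=> cX Dxp [Xxp opt] Xx' hx'f.
apply/ler_addgt0Pr => eps eps0.
have [lam [lam0 lam1 slope]] := subdiff_slope_le Dxp hx'f eps0.
set v := x' - xp in slope *; set w := xp + lam *: v in slope.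
have Xw : X w.
  have -> : w = lam *: x' + (1 - lam) *: xp by apply/rowP => i; rewrite !mxE; ring.
  by apply: convex_set_comb; rewrite // ltW.
have := opt w Xw; rewrite /breg.
have -> : x - w = (x - xp) - lam *: v by rewrite opprD addrA.
have -> : w - x = (xp - x) + lam *: v by rewrite addrAC.
rewrite [pair y (_ - lam *: v)]pairBr [pair _ (_ + lam *: v)]pairDr !pairZr pairBl.
move=> opt_w.
have : lam * (pair y v - (pair (gradh xp) v - pair (gradh x) v + eps)) <= 0 by nra.
by rewrite pmulr_rle0 // subr_le0.
Qed.

End ProperConvexFunction.

Lemma breg_sym_sum (R : realType) d (h : 'rV[R]_d -> \bar R) (gradh : 'rV[R]_d -> 'rV[R]_d) p x :
  breg h gradh p x + breg h gradh x p = pair (gradh p - gradh x) (p - x).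
Proof. by rewrite /breg pairBl -[x - p]opprB pairNr; lra. Qed.

Lemma breg_ge0 (R : realType) d (nrm : 'rV[R]_d -> R) X h gradh K p x :
  bregman_fun nrm X h gradh K -> dom_subdiff h x -> dom_subdiff h p -> 0 <= breg h gradh p x.
Proof.
case=> _ [_ [_ [_ [_ [hgrad [_ [K0 hsc]]]]]]] Dx Dp.
have [hxf _] := hgrad x Dx; have [hpf _] := hgrad p Dp.
have := hsc x p Dx Dp; rewrite -(fineK hxf) -(fineK hpf) -!EFinD lee_fin /breg.
have : 0 <= K / 2 * nrm (p - x) ^+ 2 by rewrite mulr_ge0 ?sqr_ge0 // divr_ge0 // ltW.
lra.
Qed.

Lemma ler_2sqr_of_ler_mul_sqrt (R : rcfType) (S c : R) :
  0 <= c -> S <= c * Num.sqrt (2 * S) -> S <= 2 * c ^+ 2.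
Proof.
move=> c0 Sc; have [S0|S0] := leP S 0; first by apply: le_trans S0 _; rewrite mulr_ge0 ?sqr_ge0.
have s2 : Num.sqrt (2 * S) ^+ 2 = 2 * S by rewrite sqr_sqrtr // mulr_ge0 // ltW.
have := sqrtr_ge0 (2 * S); set s := Num.sqrt _ in Sc s2 * => s0.
nra.
Qed.

Lemma prox_step_breg_le (R : realType) d (nrm : 'rV[R]_d -> R) (X : set 'rV[R]_d)
    (f h : 'rV[R]_d -> \bar R) (gradf gradh : 'rV[R]_d -> 'rV[R]_d) (K G gm : R) b a :
  convex_set X -> bregman_fun nrm X h gradh K -> 0 <= G ->
  rel_continuous f h gradf gradh G -> dom_subdiff h b -> dom_subdiff h a -> 0 <= gm ->
  is_prox X h gradh b (- (gm *: gradf b)) a ->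
  breg h gradh b a + breg h gradh a b <= 2 * (gm * G) ^+ 2.
Proof.
move=> cX hB G0 hrel Db Da gm0 prox_a.
move: (hB) => [h_nmo [h_convex [h_lsc [DX [Xdom [hgrad [hcont _]]]]]]].
have [hbf _] := hgrad b Db.
have Xa : X a by case: prox_a.
have vi : pair (gradh b - gradh a) (b - a) <= gm * pair (gradf b) (b - a).
  move: (prox_variational_ineq h_convex h_nmo h_lsc hgrad hcont cX Da prox_a (DX _ Db) hbf).
  rewrite (pairNl (gm *: gradf b)) pairZl -[gradh b - gradh a]opprB.
  by rewrite (pairNl (gradh a - gradh b)) lerNl.
apply: ler_2sqr_of_ler_mul_sqrt; first exact: mulr_ge0.
rewrite {1}breg_sym_sum; apply: le_trans vi _; rewrite -mulrA; apply: ler_wpM2l => //.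
apply: le_trans (proj2 (hrel b a Db (Xdom a Xa))) _; apply: ler_wpM2l => //.
have [Dab Dba] := (breg_ge0 hB Db Da, breg_ge0 hB Da Db).
rewrite ler_sqrt ?ler_pM2l ?lerDr //; exact: mulr_ge0 _ (addr_ge0 Dba Dab).
Qed.

Unset Implicit Arguments.

Theorem lemma1 (R : realType) (d : nat) (nrm : 'rV[R]_d -> R)
  (X : set 'rV[R]_d) (f h : 'rV[R]_d -> \bar R)
  (gradf gradh : 'rV[R]_d -> 'rV[R]_d) (K G : R)
  (x : nat -> 'rV[R]_d) (gamma delta : nat -> R) :
  is_norm nrm ->
  convex_set X ->
  proper_fun f -> lower_semicontinuous f -> convex_fun f ->
  edom f = X ->
  (exists xs, forall z, (f xs <= f z)%E) ->
  (forall z, dom_subdiff f z -> subdiff f z (gradf z)) ->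
  bregman_fun nrm X h gradh K ->
  0 < G -> rel_continuous f h gradf gradh G ->
  (* AdaMir with perfect gradients *)
  x 0%N != x 1%N ->
  (forall t, dom_subdiff h (x t)) ->
  delta 0%N = Num.sqrt (breg h gradh (x 0%N) (x 1%N) + breg h gradh (x 1%N) (x 0%N)) ->
  (forall t, (1 <= t)%N ->
     gamma t = (Num.sqrt (\sum_(s < t) delta s ^+ 2))^-1) ->
  (forall t, (1 <= t)%N ->
     is_prox X h gradh (x t) (- (gamma t *: gradf (x t))) (x t.+1)) ->
  (forall t, (1 <= t)%N ->
     delta t = Num.sqrt (breg h gradh (x t) (x t.+1) + breg h gradh (x t.+1) (x t))
               / gamma t) ->
  forall t, (1 <= t)%N -> delta t ^+ 2 <= 2 * G ^+ 2.
Proof.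
move=> _ cX _ _ _ _ _ _ hB G0 hrel _ Dx _ gamma_def prox delta_def t t1.
have gm0 : 0 <= gamma t by rewrite gamma_def // invr_ge0 sqrtr_ge0.
have step := prox_step_breg_le cX hB (ltW G0) hrel (Dx t) (Dx t.+1) gm0 (prox t t1).
have S0 : 0 <= breg h gradh (x t) (x t.+1) + breg h gradh (x t.+1) (x t).
  by rewrite addr_ge0 // (breg_ge0 hB) ?Dx.
rewrite delta_def //.
(* gamma t = 0 only via the junk value 0^-1 = 0, and then delta t = 0. *)
have [->|gm_neq0] := eqVneq (gamma t) 0; first by rewrite invr0 mulr0 expr0n mulr_ge0 ?sqr_ge0.
rewrite expr_div_n sqr_sqrtr // ler_pdivrMr ?exprn_gt0 ?lt_def ?gm_neq0 //.
by rewrite -mulrA -exprMn [G * _]mulrC.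
Qed.
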